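(* For any $\epsilon>0$ and any $N\in\mathbb{N}$ there exists $\delta>0$ such that: for any C*-algebra $A$ and any $a\in A$ with $\|a\|\le 2$, $\|a\cdot a^*\|<\delta$ and $\|a^*\cdot a\|<\delta$, there exists a quasi-unitary $u\in\widehat{\mathcal{U}}(A)$ with $\|\mu^A_N(u)-\mu^A_N(a)\|<\epsilon$.
   Context: In a C*-algebra $A$, $a\cdot b := a+b-ab$ (an associative operation). A quasi-unitary is $u\in A$ with $u\cdot u^*=u^*\cdot u=0$, and $\widehat{\mathcal{U}}(A)$ is the set of quasi-unitaries. For any $a\in A$, $\mu^A_N(a)$ denotes the $N$-fold product $a\cdot a\cdots a$ ($N$ factors). *)

From HB Require Import structures.
From mathcomp Require Import all_boot all_order all_algebra.
From mathcomp Require Import all_classical all_reals all_analysis.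
From mathcomp Require Import complex.
Set Implicit Arguments. Unset Strict Implicit. Unset Printing Implicit Defensive.
Import Order.TTheory GRing.Theory Num.Theory.
Import numFieldNormedType.Exports.
Local Open Scope ring_scope.

Record cstar_alg (R : realType) (V : completeNormedModType R[i]) := CstarAlg {
  cmul : V -> V -> V;
  cstar : V -> V;
  cmulA : forall x y z, cmul x (cmul y z) = cmul (cmul x y) z;
  cmulDl : forall x y z, cmul (x + y) z = cmul x z + cmul y z;
  cmulDr : forall x y z, cmul x (y + z) = cmul x y + cmul x z;
  cmulZl : forall (c : R[i]) x y, cmul (c *: x) y = c *: cmul x y;
  cmulZr : forall (c : R[i]) x y, cmul x (c *: y) = c *: cmul x y;
  cnorm_mul : forall x y, `|cmul x y| <= `|x| * `|y|;
  cstarK : forall x, cstar (cstar x) = x;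
  cstarD : forall x y, cstar (x + y) = cstar x + cstar y;
  cstarZ : forall (c : R[i]) x, cstar (c *: x) = (Num.conj c) *: cstar x;
  cstarM : forall x y, cstar (cmul x y) = cmul (cstar y) (cstar x);
  cstar_id : forall x, `|cmul (cstar x) x| = `|x| ^+ 2
}.

Section QuasiOps.
Variables (R : realType) (V : completeNormedModType R[i]) (A : cstar_alg V).

Definition qmul (a b : V) : V := a + b - cmul A a b.

Definition quasi_unitary (u : V) : Prop :=
  qmul u (cstar A u) = 0 /\ qmul (cstar A u) u = 0.

(* mu_N(a) = a . a . ... . a  (N factors); mu_0(a) = 0, the unit of "." *)
Definition mu (N : nat) (a : V) : V := iter N (qmul a) 0.
End QuasiOps.

From HB Require Import structures.
From mathcomp Require Import all_boot all_order all_algebra.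
From mathcomp Require Import all_classical all_reals all_analysis.
From mathcomp Require Import complex.
From mathcomp Require Import ring lra.
Import Order.TTheory GRing.Theory Num.Theory.
Import numFieldNormedType.Exports.
Local Open Scope ring_scope.
Local Open Scope complex_scope.
Local Open Scope classical_set_scope.
Set Implicit Arguments. Unset Strict Implicit. Unset Printing Implicit Defensive.

(* Write x.y for the quasi-product.  The element h := a^*.a is self-adjoint and
   of norm < delta.  The map k |-> (k^* + k - (k^*.h).k) / 2 is a contraction of
   a small ball, and its fixed point k is self-adjoint with (k^*.h).k = 0.  Then
   u := a.k satisfies u^*.u = (k^*.h).k = 0, so e := u.u^* satisfies e.e = e,
   i.e. e is an idempotent; as u is close to a, e is close to a.a^*, so
   |e| < 1 and hence e = 0.  Finally mu_N is Lipschitz on bounded sets. *)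

Section RealNorm.
Variables (R : realType) (V : normedModType R[i]).

(* The norm of V is complex-valued but real and nonnegative; [rnorm] is its
   real part, so that estimates can be closed by [lra]/[nra] over R. *)
Definition rnorm (x : V) : R := complex.Re `|x|.

Lemma normE x : `|x| = (rnorm x)%:C.
Proof. by rewrite /rnorm RRe_real // ger0_real. Qed.

Lemma rnorm_ge0 x : 0 <= rnorm x.
Proof. by rewrite -ler0c -normE. Qed.

Lemma rnorm0 : rnorm 0 = 0.
Proof. by rewrite /rnorm normr0. Qed.

Lemma rnorm_eq0 x : (rnorm x == 0) = (x == 0).
Proof. by rewrite -(normr_eq0 x) normE -[0 : R[i]]/(0%:C) (inj_eq (@complexI _)). Qed.

Lemma rnormN x : rnorm (- x) = rnorm x.
Proof. by rewrite /rnorm normrN. Qed.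

Lemma ler_rnormD x y : rnorm (x + y) <= rnorm x + rnorm y.
Proof. by have := ler_normD x y; rewrite !normE -rmorphD lecR. Qed.

Lemma ler_rnormB x y : rnorm (x - y) <= rnorm x + rnorm y.
Proof. by rewrite -(rnormN y) ler_rnormD. Qed.

Lemma ler_rnormDB x y z : rnorm (x + y - z) <= rnorm x + rnorm y + rnorm z.
Proof. by apply: le_trans (ler_rnormB _ _) _; rewrite lerD2r ler_rnormD. Qed.

Lemma rnormZ (c : R) x : rnorm (c%:C *: x) = `|c| * rnorm x.
Proof. by rewrite {1}/rnorm normrZ normE normc_def /= expr0n addr0 sqrtr_sqr mulr0 subr0. Qed.

Lemma rnorm_lt x (d : R) : (`|x| < d%:C) = (rnorm x < d).
Proof. by rewrite normE ltcR. Qed.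

Lemma rnorm_le x (d : R) : (`|x| <= d%:C) = (rnorm x <= d).
Proof. by rewrite normE lecR. Qed.

End RealNorm.

Lemma geometric_lt (R : realType) (K q e : R) : 0 <= q -> q < 1 -> 0 < e ->
  \forall n \near \oo, K * q ^+ n < e.
Proof.
move=> q0 q1 e0; have /cvgr0_norm_lt/(_ e e0) : geometric K q @ \oo --> 0.
  by apply: cvg_geometric; rewrite ger0_norm.
by apply: filterS => n /(le_lt_trans (ler_norm _)).
Qed.

(* [banach_fixed_point] (sequences.v) needs a normed space over a realType,
   whereas V is normed over R[i]. *)
Section ContractionFixedPoint.
Variables (R : realType) (V : completeNormedModType R[i]) (f : V -> V) (r q : R).
Hypotheses (r_ge0 : 0 <= r) (q_ge0 : 0 <= q) (q_lt1 : q < 1).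
Hypothesis f_ball : forall x, rnorm x <= r -> rnorm (f x) <= r.
Hypothesis f_contraction : forall x y, rnorm x <= r -> rnorm y <= r ->
  rnorm (f x - f y) <= q * rnorm (x - y).

Let y n := iter n f 0.

Let iter_ball n : rnorm (y n) <= r.
Proof. by elim: n => [|n IH]; [rewrite /y /= rnorm0 | exact: f_ball]. Qed.

Let iter_step n : rnorm (y n.+1 - y n) <= r * q ^+ n.
Proof.
elim: n => [|n IH]; first by rewrite /y /= subr0 mulr1 f_ball ?rnorm0.
change (rnorm (f (y n.+1) - f (y n)) <= r * q ^+ n.+1).
apply: le_trans (f_contraction (iter_ball _) (iter_ball _)) _.
by rewrite exprS mulrCA ler_wpM2l.
Qed.

Let iter_dist n k :
  rnorm (y n - y (n + k)%N) <= r / (1 - q) * (q ^+ n - q ^+ (n + k)).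
Proof.
elim: k => [|k IH]; first by rewrite addn0 !subrr rnorm0 mulr0.
have -> : y n - y (n + k.+1)%N = (y n - y (n + k)%N) - (y (n + k).+1 - y (n + k)%N).
  by rewrite addnS opprB addrA subrK.
apply: le_trans (ler_rnormB _ _) _.
have q1 : 1 - q != 0 by rewrite subr_eq0 gt_eqF.
have -> : r / (1 - q) * (q ^+ n - q ^+ (n + k.+1)) =
          r / (1 - q) * (q ^+ n - q ^+ (n + k)) + r * q ^+ (n + k).
  by rewrite addnS exprS; field.
exact: lerD IH (iter_step _).
Qed.

Let iter_dist_le n m : (n <= m)%N -> rnorm (y n - y m) <= r / (1 - q) * q ^+ n.
Proof.
move=> /subnK <-; rewrite addnC; apply: le_trans (iter_dist _ _) _.
apply: ler_wpM2l; first by rewrite divr_ge0 // subr_ge0 ltW.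
by rewrite gerBl exprn_ge0.
Qed.

Let iter_cvg : cvgn y.
Proof.
apply/cauchy_cvgP/cauchy_exP => e e0.
have Ree : e = (complex.Re e)%:C by rewrite RRe_real // gtr0_real.
have Re0 : 0 < complex.Re e by rewrite -ltcR -Ree.
have [N _ HN] := geometric_lt (r / (1 - q)) q_ge0 q_lt1 Re0.
exists (y N), N => // n /= Nn; rewrite -ball_normE /= Ree rnorm_lt.
exact: le_lt_trans (iter_dist_le Nn) (HN N (leqnn N)).
Qed.

Let lim_iter e : 0 < e -> \forall n \near \oo, rnorm (limn y - y n) < e.
Proof.
move=> e0; have /cvgr_dist_lt/(_ e%:C) := iter_cvg; rewrite ltcR => /(_ e0).
by apply: filterS => n; rewrite rnorm_lt.
Qed.

Lemma contraction_fixed_point : exists2 x, rnorm x <= r & f x = x.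
Proof.
set l := limn y.
have l_ball : rnorm l <= r.
  apply/ler_addgt0Pr => e /lim_iter [N _ HN].
  rewrite -(subrK (y N) l); apply: le_trans (ler_rnormD _ _) _.
  by rewrite addrC lerD ?iter_ball ?ltW ?(HN N (leqnn N)).
exists l => //; apply/eqP; rewrite -subr_eq0 -rnorm_eq0 eq_le rnorm_ge0 andbT.
apply/ler_addgt0Pr => e e0; rewrite add0r.
have [N _ HN] := lim_iter (divr_gt0 e0 (ltr0n _ 2)).
have -> : f l - l = (f l - f (y N)) - (l - y N.+1) by rewrite opprB addrA subrK.
apply: le_trans (ler_rnormB _ _) _.
apply: le_trans (lerD (f_contraction l_ball (iter_ball N)) (ltW (HN _ (leqnSn N)))) _.
have dN : rnorm (l - y N) < e / 2 := HN N (leqnn N).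
have := ler_piMl (rnorm_ge0 (l - y N)) (ltW q_lt1); lra.
Qed.

End ContractionFixedPoint.

Lemma sub_addB (V : zmodType) (a b c a' b' c' : V) :
  (a + b - c) - (a' + b' - c') = (a - a') + (b - b') - (c - c').
Proof. by rewrite !opprD !opprK addrACA [a + b + _]addrACA. Qed.

Section CstarAlgebra.
Variables (R : realType) (V : completeNormedModType R[i]) (A : cstar_alg V).
Local Notation m := (cmul A).
Local Notation s := (cstar A).
Local Notation q := (qmul A).

Lemma cmul0l x : m 0 x = 0.
Proof. by have := cmulZl A 0 0 x; rewrite !scale0r. Qed.

Lemma cmul0r x : m x 0 = 0.
Proof. by have := cmulZr A 0 x 0; rewrite !scale0r. Qed.

Lemma cmulBl x y z : m (x - y) z = m x z - m y z.
Proof. by rewrite cmulDl -scaleN1r cmulZl scaleN1r. Qed.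

Lemma cmulBr x y z : m x (y - z) = m x y - m x z.
Proof. by rewrite cmulDr -scaleN1r cmulZr scaleN1r. Qed.

Lemma cstarB x y : s (x - y) = s x - s y.
Proof. by rewrite cstarD -scaleN1r cstarZ rmorphN1 scaleN1r. Qed.

Lemma qmul0l x : q 0 x = x.
Proof. by rewrite /qmul cmul0l add0r subr0. Qed.

Lemma qmul0r x : q x 0 = x.
Proof. by rewrite /qmul cmul0r addr0 subr0. Qed.

Lemma qmulA x y z : q (q x y) z = q x (q y z).
Proof.
rewrite /qmul cmulBl !cmulDl cmulBr !cmulDr cmulA (addrAC (x + y)) !addrA -!addrA -!opprD.
by congr (x + (y + (z - _))); rewrite [RHS]addrCA [m y z + (_ + _)]addrCA.
Qed.

Lemma cstar_qmul x y : s (q x y) = q (s y) (s x).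
Proof. by rewrite /qmul cstarB cstarD cstarM (addrC (s x)). Qed.

Lemma qmul_idem e : q e e = e -> m e e = e.
Proof. by move=> /eqP; rewrite /qmul subr_eq addrC (inj_eq (addrI e)) => /eqP <-. Qed.

Lemma cmulB x1 y1 x2 y2 : m x1 y1 - m x2 y2 = m (x1 - x2) y1 + m x2 (y1 - y2).
Proof. by rewrite cmulBl cmulBr addrA subrK. Qed.

Lemma qmulB x1 y1 x2 y2 :
  q x1 y1 - q x2 y2 = (x1 - x2) + (y1 - y2) - (m x1 y1 - m x2 y2).
Proof. exact: sub_addB. Qed.

Lemma rnormM x y : rnorm (m x y) <= rnorm x * rnorm y.
Proof. by have := cnorm_mul A x y; rewrite !normE -rmorphM lecR. Qed.

Lemma rnormM_le x y a b : rnorm x <= a -> rnorm y <= b -> rnorm (m x y) <= a * b.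
Proof. by move=> xa yb; apply: le_trans (rnormM x y) (ler_pM (rnorm_ge0 _) (rnorm_ge0 _) xa yb). Qed.

Lemma rnorm_cstar x : rnorm (s x) = rnorm x.
Proof.
suff le_star y : rnorm y <= rnorm (s y) by apply/le_anti; rewrite -{2}(cstarK A x) !le_star.
have sq : rnorm y ^+ 2 <= rnorm (s y) * rnorm y.
  by have := cstar_id A y; rewrite !normE -rmorphXn => /complexI <-; exact: rnormM.
have [->|y0] := eqVneq (rnorm y) 0; first exact: rnorm_ge0.
by rewrite -(ler_pM2r (_ : 0 < rnorm y)) ?mulrr // lt_def y0 rnorm_ge0.
Qed.

Lemma rnorm_cmulB x1 y1 x2 y2 :
  rnorm (m x1 y1 - m x2 y2) <= rnorm (x1 - x2) * rnorm y1 + rnorm x2 * rnorm (y1 - y2).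
Proof. by rewrite cmulB; apply: le_trans (ler_rnormD _ _) _; rewrite lerD ?rnormM. Qed.

Lemma rnorm_qmul x y : 1 + rnorm (q x y) <= (1 + rnorm x) * (1 + rnorm y).
Proof.
have := ler_rnormDB x y (m x y); have := rnormM x y; lra.
Qed.

Lemma rnorm_qmulB x1 y1 x2 y2 : rnorm (q x1 y1 - q x2 y2) <=
  rnorm (x1 - x2) * (1 + rnorm y1) + (1 + rnorm x2) * rnorm (y1 - y2).
Proof.
rewrite qmulB; apply: le_trans (ler_rnormDB _ _ _) _.
have := rnorm_cmulB x1 y1 x2 y2; lra.
Qed.

Lemma cmul_idem_eq0 e : m e e = e -> rnorm e < 1 -> e = 0.
Proof.
move=> ee e1; apply/eqP; rewrite -rnorm_eq0 eq_le rnorm_ge0 andbT.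
have := rnormM e e; rewrite ee; have := rnorm_ge0 e; nra.
Qed.

Lemma rnorm_mu n x r : rnorm x <= r -> 1 + rnorm (mu A n x) <= (1 + r) ^+ n.
Proof.
move=> x_le; elim: n => [|n IH]; first by rewrite /= rnorm0 addr0 expr0.
apply: le_trans (rnorm_qmul x (mu A n x)) _; rewrite exprS.
by rewrite ler_pM ?addr_ge0 ?rnorm_ge0 ?lerD2l.
Qed.

Lemma rnorm_muB n x y r : rnorm x <= r -> rnorm y <= r ->
  rnorm (mu A n x - mu A n y) <= n%:R * (1 + r) ^+ n * rnorm (x - y).
Proof.
move=> x_le y_le; have r_ge0 : 0 <= r := le_trans (rnorm_ge0 x) x_le.
elim: n => [|n IH]; first by rewrite subrr rnorm0 !mul0r.
apply: le_trans (rnorm_qmulB x (mu A n x) y (mu A n y)) _.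
set D := rnorm (x - y); set P := (1 + r) ^+ n.
have P_ge0 : 0 <= P by rewrite exprn_ge0 // addr_ge0.
have := ler_wpM2l (rnorm_ge0 (x - y)) (rnorm_mu n x_le); rewrite -/D -/P.
have := ler_pM (addr_ge0 ler01 (rnorm_ge0 y)) (rnorm_ge0 _) (lerD (lexx 1) y_le) IH.
have := mulr_ge0 (mulr_ge0 r_ge0 P_ge0) (rnorm_ge0 (x - y)); rewrite -/D -natr1 exprS -/P.
lra.
Qed.

Lemma quasi_isometry_unitary u :
  q (s u) u = 0 -> rnorm (q u (s u)) < 1 -> quasi_unitary A u.
Proof.
move=> uu small; split=> //; apply: cmul_idem_eq0 small; apply: qmul_idem.
by rewrite qmulA -(qmulA (s u) u) uu qmul0l.
Qed.

Definition polar_map h k : V := (2^-1)%:C *: (s k + k - q (q (s k) h) k).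

Lemma polar_mapE h k : s k + k - q (q (s k) h) k = m (s k) (q h k) + m h k - h.
Proof.
rewrite qmulA {1}/qmul (addrC (s k)) -(addrA (s k)) (addrKA (s k)) opprB addrCA -addrA.
by congr (_ + _); rewrite /qmul opprB addrCA (addrC h) opprD addNKr.
Qed.

Lemma polar_map_fixed h k : s h = h -> polar_map h k = k ->
  s k = k /\ q (q (s k) h) k = 0.
Proof.
move=> sh fixk; set Q := q (q (s k) h) k.
have sQ : s Q = Q by rewrite /Q !cstar_qmul sh cstarK qmulA.
have sk : s k = k.
  rewrite -{1}fixk /polar_map cstarZ conj_Creal ?complex_real //.
  by rewrite cstarB cstarD cstarK sQ (addrC k).
split=> //; move/(congr1 (fun x => 2%:C *: x)): fixk.
rewrite /polar_map scalerA -rmorphM mulfV ?pnatr_eq0 // scale1r rmorph_nat scaler_nat mulr2n sk.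
by rewrite -[RHS]addr0 /Q sk => /addrI /eqP; rewrite oppr_eq0 => /eqP.
Qed.

Section PolarMapContraction.
Variables (h : V) (d : R).
Hypotheses (d_ge0 : 0 <= d) (d_small : d <= 8^-1) (h_le : rnorm h <= d).

(* [lra] and [nra] ignore section hypotheses, hence the explicit [have := ...]. *)

Let d_sq : d ^+ 2 <= d / 8.
Proof. by rewrite expr2 ler_wpM2l. Qed.

Let rnorm_polar_map k :
  rnorm (polar_map h k) = 2^-1 * rnorm (m (s k) (q h k) + m h k - h).
Proof. by rewrite /polar_map rnormZ polar_mapE ger0_norm. Qed.

Let rnorm_qmul_h k : rnorm k <= 2 * d -> rnorm (q h k) <= 3 * d + 2 * d ^+ 2.
Proof.
move=> k_le; have := rnorm_qmul h k.
have := ler_pM (addr_ge0 ler01 (rnorm_ge0 h)) (addr_ge0 ler01 (rnorm_ge0 k))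
  (lerD (lexx 1) h_le) (lerD (lexx 1) k_le).
lra.
Qed.

Lemma polar_map_ball k : rnorm k <= 2 * d -> rnorm (polar_map h k) <= 2 * d.
Proof.
move=> k_le; rewrite rnorm_polar_map.
have sk_le : rnorm (s k) <= 2 * d by rewrite rnorm_cstar.
have := ler_rnormDB (m (s k) (q h k)) (m h k) h.
have := rnormM_le sk_le (rnorm_qmul_h k_le); have := rnormM_le h_le k_le.
have := ler_wpM2l d_ge0 d_sq; have := d_sq; have := d_small; have := d_ge0; have := h_le.
lra.
Qed.

Lemma polar_map_contraction k1 k2 : rnorm k1 <= 2 * d -> rnorm k2 <= 2 * d ->
  rnorm (polar_map h k1 - polar_map h k2) <= 2^-1 * rnorm (k1 - k2).
Proof.
move=> k1_le k2_le; rewrite /polar_map -scalerBr rnormZ !polar_mapE sub_addB subrr subr0.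
rewrite ger0_norm // ler_wpM2l // -cmulBr; apply: le_trans (ler_rnormD _ _) _.
have := rnorm_cmulB (s k1) (q h k1) (s k2) (q h k2); rewrite -cstarB !rnorm_cstar.
have := rnorm_qmulB h k1 h k2; rewrite subrr rnorm0 mul0r add0r.
have := rnormM h (k1 - k2); have := rnorm_qmul_h k1_le.
have := rnorm_ge0 (q h k1 - q h k2); have := rnorm_ge0 (k1 - k2).
have := d_sq; have := d_small; have := d_ge0; have := h_le.
nra.
Qed.

End PolarMapContraction.

Lemma quasi_unitary_near a d : 0 <= d -> d <= 100^-1 -> rnorm a <= 2 ->
  rnorm (q a (s a)) <= d -> rnorm (q (s a) a) <= d ->
  exists2 u, quasi_unitary A u & rnorm (u - a) <= 6 * d.
Proof.
move=> d_ge0 d_le a_le aa_le h_le; set h := q (s a) a in h_le.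
have sh : s h = h by rewrite cstar_qmul cstarK.
have d8 : d <= 8^-1 by lra.
have half_ge0 : (0 : R) <= 2^-1 by lra.
have half_lt1 : (2^-1 : R) < 1 by lra.
have [k k_le k_fix] := contraction_fixed_point (mulr_ge0 (ler0n R 2) d_ge0)
  half_ge0 half_lt1 (polar_map_ball d_ge0 d8 h_le) (polar_map_contraction d_ge0 d8 h_le).
have [_ k_null] := polar_map_fixed sh k_fix.
have u_a : rnorm (q a k - a) <= 6 * d.
  have := rnorm_qmulB a k a 0; rewrite qmul0r subrr subr0 rnorm0 mul0r add0r.
  have := ler_pM (addr_ge0 ler01 (rnorm_ge0 a)) (rnorm_ge0 k) (lerD (lexx 1) a_le) k_le.
  lra.
exists (q a k) => //; set u := q a k in u_a *.
have u_le : rnorm u <= 3.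
  rewrite -(subrK a u); apply: le_trans (ler_rnormD _ _) _; lra.
apply: quasi_isometry_unitary.
  by rewrite cstar_qmul qmulA -(qmulA (s a) a k) -qmulA.
rewrite -(subrK (q a (s a)) (q u (s u))); apply: le_lt_trans (ler_rnormD _ _) _.
have := rnorm_qmulB u (s u) a (s a); rewrite -cstarB !rnorm_cstar.
have := ler_wpM2l (rnorm_ge0 (u - a)) (lerD (lexx 1) u_le).
have := ler_wpM2r (rnorm_ge0 (u - a)) (lerD (lexx 1) a_le).
have := rnorm_ge0 (u - a); nra.
Qed.

End CstarAlgebra.

Theorem lemma2p4 (R : realType) (eps : R) (N : nat) : 0 < eps ->
  exists delta : R, 0 < delta /\
    forall (V : completeNormedModType R[i]) (A : cstar_alg V) (a : V),
      `|a| <= 2 ->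
      `|qmul A a (cstar A a)| < delta%:C ->
      `|qmul A (cstar A a) a| < delta%:C ->
      exists u : V, quasi_unitary A u /\
        `|mu A N u - mu A N a| < eps%:C.
Proof.
move=> eps_gt0; pose c : R := N%:R * 4 ^+ N.
have c_ge0 : 0 <= c by rewrite mulr_ge0 ?exprn_ge0.
pose delta := Num.min (100^-1) (eps / (6 * (c + 1))).
have delta_gt0 : 0 < delta by rewrite lt_min invr_gt0 ltr0n divr_gt0 ?mulr_gt0 ?ltr_wpDl.
have delta_le : delta <= 100^-1 by rewrite ge_min lexx.
have delta_eps : 6 * c * delta < eps.
  have : delta <= eps / (6 * (c + 1)) by rewrite ge_min lexx orbT.
  rewrite ler_pdivlMr ?mulr_gt0 ?ltr_wpDl //; nra.
exists delta; split=> // V A a a_le; rewrite !rnorm_lt => aa hh.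
have {}a_le : rnorm a <= 2 by rewrite -rnorm_le rmorph_nat.
have [u uU u_a] := quasi_unitary_near (ltW delta_gt0) delta_le a_le (ltW aa) (ltW hh).
exists u; split=> //; rewrite rnorm_lt.
have u_le : rnorm u <= 3.
  rewrite -(subrK a u); apply: le_trans (ler_rnormD _ _) _; lra.
have a_le3 : rnorm a <= 3 by lra.
apply: le_lt_trans (rnorm_muB A N u_le a_le3) _.
rewrite (_ : 1 + 3 = 4) -/c; last by lra.
by apply: le_lt_trans delta_eps; have := ler_wpM2l c_ge0 u_a; lra.
Qed.
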